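(* Let $H$ denote the Hilbert transform on $\mathbb{R}$ normalized so that $H(\chi_{(0,1)})(y)=\log\frac{|y|}{|y-1|}$, and let $H^{*}g(x)=\sup_{\epsilon>0}\big|\int_{|x-y|>\epsilon}\frac{g(y)}{x-y}\,dy\big|$ be the associated maximal operator (same normalization). Let $f=\chi_{(0,1)}$. Then there exist constants $m>1$ and $C>0$ such that $$H^{*}(Hf)(x)\ge C\,\frac{\log x}{x}\qquad\text{for all }x>m.$$ *)

From Stdlib Require Import Reals.
Open Scope R_scope.

Definition clampR (N t : R) : R := Rmax (- N) (Rmin N t).

(* Lebesgue integral over the whole real line, for absolutely integrable
   functions h whose bounded truncations are Riemann integrable on compacts:
   line_int h L  <->  lim_{N -> oo} \int_{-N}^{N} clamp_N (h y) dy = L.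
   (By monotone/dominated convergence this coincides with the Lebesgue
   integral of h whenever h is absolutely integrable.) *)
Definition line_int (h : R -> R) (L : R) : Prop :=
  exists N0 : nat,
    (forall N : nat, (N0 <= N)%nat ->
       inhabited (Riemann_integrable (fun y => clampR (INR N) (h y)) (- INR N) (INR N))) /\
    (forall eta : R, 0 < eta -> exists N1 : nat, forall N : nat, (N1 <= N)%nat ->
       forall pr : Riemann_integrable (fun y => clampR (INR N) (h y)) (- INR N) (INR N),
         Rabs (RiemannInt pr - L) < eta).

(* Integrand of the truncated Hilbert transform at x with truncation eps:
   y |-> 1_{|x-y|>eps} g(y)/(x-y)   (kernel 1/(x-y), no factor 1/pi). *)
Definition trunc_kernel (g : R -> R) (x eps : R) (y : R) : R :=
  if Rle_dec (Rabs (x - y)) eps then 0 else g y / (x - y).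

(* Maximal Hilbert transform lower bound:
   Hstar_ge g x c  <->  H* g (x) = sup_{eps>0} |\int_{|x-y|>eps} g(y)/(x-y) dy| >= c,
   phrased as "every upper bound of the set of these values is >= c". *)
Definition Hstar_ge (g : R -> R) (x c : R) : Prop :=
  forall M : R,
    (forall eps I : R, 0 < eps -> line_int (trunc_kernel g x eps) I -> Rabs I <= M) ->
    c <= M.

(* H(chi_(0,1)) with the normalization of the paper:
   H(chi_(0,1))(y) = log (|y| / |y-1|)  (a.e.; values at y = 0, 1 irrelevant). *)
Definition H_chi01 (y : R) : R := ln (Rabs y / Rabs (y - 1)).

(* Fix x > 1 and the single truncation eps = x + 1.  The truncated kernel
     k(y) = 1_{|x-y| > x+1} log(|y|/|y-1|) / (x-y)
   vanishes on [-1, 2x+1]; on y < -1 it equals log(-y/(1-y))/(x-y) and on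
   y > 2x+1 it equals log(y/(y-1))/(x-y).  Elementary bounds on the logarithm
   (1 - 1/z <= log z <= z - 1) show that both branches are nonpositive, take
   values in [-1, 0], and are bounded below by integrable functions of total
   mass 1, while on [-x, -1] the left branch is below 1/(4xy), whose integral
   is -log x/(4x).  Hence the symmetric integrals S(N) of k over [-N, N]
   decrease in N, stay >= -2 and <= -log x/(4x); they converge to some l with
   |l| >= log x/(4x).  Since |k| <= 1, clamping k at level N >= 1 changes
   nothing, so l is the whole-line integral of k in the sense of [line_int],
   and H*(H chi_(0,1))(x) >= |l| >= (1/4) log x / x for every x > 2. *)

From Stdlib Require Import Reals Lra Lia.
From Coquelicot Require Import Coquelicot.
Open Scope R_scope.

Lemma ln_le_sub1 z : 0 < z -> ln z <= z - 1.
Proof.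
  intros hz. destruct (Req_dec z 1) as [->|hne].
  - rewrite ln_1; lra.
  - assert (hexp := exp_ineq1 (z - 1) ltac:(lra)).
    left. rewrite <- (ln_exp (z - 1)). apply ln_increasing; lra.
Qed.

Lemma one_sub_inv_le_ln z : 0 < z -> 1 - / z <= ln z.
Proof.
  intros hz. assert (h := ln_le_sub1 (/ z) (Rinv_0_lt_compat _ hz)).
  rewrite ln_Rinv in h by lra. lra.
Qed.

Lemma clampR_id N t : Rabs t <= N -> clampR N t = t.
Proof.
  intros ht. apply Rabs_le_between in ht. unfold clampR.
  rewrite Rmin_right by lra. rewrite Rmax_right by lra. reflexivity.
Qed.

Lemma line_int_of_lim (k : R -> R) (l : R) (N0 : nat) :
  (forall y, Rabs (k y) <= INR N0) ->
  (forall N, (N0 <= N)%nat -> ex_RInt k (- INR N) (INR N)) ->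
  is_lim_seq (fun N => RInt k (- INR N) (INR N)) l ->
  line_int k l.
Proof.
  intros hbound hex hlim.
  assert (hclamp : forall N y, (N0 <= N)%nat -> clampR (INR N) (k y) = k y).
  { intros N y hN. apply clampR_id.
    apply Rle_trans with (INR N0); [apply hbound | now apply le_INR]. }
  exists N0. split.
  - intros N hN. constructor. apply ex_RInt_Reals_0.
    apply ex_RInt_ext with k; [intros y _; symmetry; now apply hclamp | now apply hex].
  - intros eta heta.
    apply is_lim_seq_spec in hlim. destruct (hlim (mkposreal eta heta)) as [N1 hN1].
    exists (N1 + N0)%nat. intros N hN pr.
    rewrite <- RInt_Reals, (RInt_ext _ k) by (intros y _; apply hclamp; lia).
    apply hN1; lia.
Qed.

Lemma Hstar_ge_of_line_int g x eps I c :
  0 < eps -> line_int (trunc_kernel g x eps) I -> c <= Rabs I -> Hstar_ge g x c.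
Proof. intros heps hI hc M hM. apply Rle_trans with (Rabs I); [exact hc | exact (hM eps I heps hI)]. Qed.

Lemma decr_bounded_lim (u : nat -> R) (B c : R) :
  (forall n, u (S n) <= u n) -> (forall n, - B <= u n) -> (forall n, u n <= c) ->
  exists l : R, is_lim_seq u l /\ l <= c.
Proof.
  intros hdecr hlow hup.
  destruct (ex_finite_lim_seq_decr u (- B) hdecr hlow) as [l hl].
  exists l. split; auto.
  exact (is_lim_seq_le u (fun _ => c) l c hup hl (is_lim_seq_const c)).
Qed.

Lemma RInt_nonpos (f : R -> R) a b :
  a <= b -> ex_RInt f a b -> (forall y, a < y < b -> f y <= 0) -> RInt f a b <= 0.
Proof.
  intros hab hf hneg. apply Rle_trans with (RInt (fun _ => 0) a b).
  - apply RInt_le; auto. apply ex_RInt_const.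
  - rewrite RInt_const. unfold scal; simpl; unfold mult; simpl. lra.
Qed.

Section TruncatedKernel.

Variable x : R.
Hypothesis hx : 1 < x.

Definition kern : R -> R := trunc_kernel H_chi01 x (x + 1).

Definition kern_left (y : R) : R := ln (- y / (1 - y)) / (x - y).
Definition kern_right (y : R) : R := ln (y / (y - 1)) / (x - y).

Lemma kern_eq_left y : y < -1 -> kern y = kern_left y.
Proof.
  intros hy. unfold kern, trunc_kernel, H_chi01, kern_left.
  destruct (Rle_dec _ _) as [hle|_].
  - rewrite Rabs_right in hle; lra.
  - rewrite (Rabs_left y), (Rabs_left (y - 1)) by lra.
    now replace (- (y - 1)) with (1 - y) by ring.
Qed.

Lemma kern_eq_right y : 2 * x + 1 < y -> kern y = kern_right y.
Proof.
  intros hy. unfold kern, trunc_kernel, H_chi01, kern_right.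
  destruct (Rle_dec _ _) as [hle|_].
  - rewrite Rabs_left in hle; lra.
  - now rewrite (Rabs_right y), (Rabs_right (y - 1)) by lra.
Qed.

Lemma kern_eq_mid y : -1 <= y <= 2 * x + 1 -> kern y = 0.
Proof.
  intros hy. unfold kern, trunc_kernel.
  destruct (Rle_dec _ _) as [_|hnle]; auto.
  exfalso. apply hnle, Rabs_le. lra.
Qed.

(* Pointwise bounds for the left branch: nonpositive, at least -1/y^2, and
   below 1/(4xy) on [-x, -1]; all come from the upper bound -1/((1-y)(x-y)). *)
Lemma kern_left_lower y : y <= -1 -> -1 / (y * y) <= kern_left y.
Proof.
  intros hy. unfold kern_left.
  assert (hlog := one_sub_inv_le_ln (- y / (1 - y)) ltac:(apply Rdiv_lt_0_compat; lra)).
  replace (1 - / (- y / (1 - y))) with (1 / y) in hlog by (field; lra).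
  apply (Rle_div_r _ _ (x - y)); [lra|].
  replace (-1 / (y * y) * (x - y)) with (1 / y - x / (y * y)) by (field; lra).
  assert (0 <= x / (y * y)) by (apply Rdiv_le_0_compat; nra). lra.
Qed.

Lemma kern_left_upper y : y <= -1 -> kern_left y <= - / ((1 - y) * (x - y)).
Proof.
  intros hy. unfold kern_left.
  assert (hlog := ln_le_sub1 (- y / (1 - y)) ltac:(apply Rdiv_lt_0_compat; lra)).
  replace (- y / (1 - y) - 1) with (- / (1 - y)) in hlog by (field; lra).
  apply (Rle_div_l _ _ (x - y)); [lra|].
  replace (- / ((1 - y) * (x - y)) * (x - y)) with (- / (1 - y)) by (field; lra). lra.
Qed.

Lemma kern_left_nonpos y : y <= -1 -> kern_left y <= 0.
Proof.
  intros hy. assert (0 < / ((1 - y) * (x - y))) by (apply Rinv_0_lt_compat; nra).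
  assert (h := kern_left_upper y hy). lra.
Qed.

Lemma kern_left_log y : - x <= y <= -1 -> kern_left y <= / (4 * x * y).
Proof.
  intros hy. apply Rle_trans with (- / ((1 - y) * (x - y))); [apply kern_left_upper; lra|].
  replace (/ (4 * x * y)) with (- / (4 * x * - y)) by (field; lra).
  apply Ropp_le_contravar, Rinv_le_contravar; nra.
Qed.

(* Pointwise bounds for the right branch: nonpositive and at least -2/(y-1)^2,
   using 1/y <= log(y/(y-1)) <= 1/(y-1) and y - x >= (y-1)/2. *)
Lemma kern_right_neg y : 2 * x + 1 <= y -> kern_right y = - (ln (y / (y - 1)) / (y - x)).
Proof. intros hy. unfold kern_right. field. lra. Qed.

Lemma kern_right_lower y : 2 * x + 1 <= y -> -2 / ((y - 1) * (y - 1)) <= kern_right y.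
Proof.
  intros hy. rewrite kern_right_neg by lra.
  assert (hlog := ln_le_sub1 (y / (y - 1)) ltac:(apply Rdiv_lt_0_compat; lra)).
  replace (y / (y - 1) - 1) with (/ (y - 1)) in hlog by (field; lra).
  assert (ln (y / (y - 1)) / (y - x) <= 2 / ((y - 1) * (y - 1))); [|lra].
  apply (Rle_div_l _ _ (y - x)); [lra|].
  replace (2 / ((y - 1) * (y - 1)) * (y - x)) with (/ (y - 1) * (2 * (y - x) / (y - 1)))
    by (field; lra).
  assert (hratio : 1 <= 2 * (y - x) / (y - 1)) by (apply (Rle_div_r _ _ (y - 1)); lra).
  assert (0 < / (y - 1)) by (apply Rinv_0_lt_compat; lra). nra.
Qed.

Lemma kern_right_nonpos y : 2 * x + 1 <= y -> kern_right y <= 0.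
Proof.
  intros hy. rewrite kern_right_neg by lra.
  assert (hlog := one_sub_inv_le_ln (y / (y - 1)) ltac:(apply Rdiv_lt_0_compat; lra)).
  replace (1 - / (y / (y - 1))) with (/ y) in hlog by (field; lra).
  assert (0 < / y) by (apply Rinv_0_lt_compat; lra).
  assert (0 <= ln (y / (y - 1)) / (y - x)); [apply (Rle_div_r _ _ (y - x)) | ]; lra.
Qed.

(* The kernel takes values in [-1, 0]; in particular clamping at level >= 1
   leaves it unchanged. *)
Lemma kern_bound y : Rabs (kern y) <= 1.
Proof.
  apply Rabs_le.
  destruct (Rlt_dec y (-1)) as [hleft|hnleft].
  { rewrite kern_eq_left by lra.
    assert (h1 := kern_left_lower y ltac:(lra)). assert (h2 := kern_left_nonpos y ltac:(lra)).
    assert (1 / (y * y) <= 1) by (apply (Rle_div_l _ _ (y * y)); nra). lra. }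
  destruct (Rlt_dec (2 * x + 1) y) as [hright|hnright].
  { rewrite kern_eq_right by lra.
    assert (h1 := kern_right_lower y ltac:(lra)). assert (h2 := kern_right_nonpos y ltac:(lra)).
    assert (2 / ((y - 1) * (y - 1)) <= 1) by (apply (Rle_div_l _ _ ((y - 1) * (y - 1))); nra).
    lra. }
  rewrite kern_eq_mid by lra. lra.
Qed.

Lemma ex_RInt_kern_left a b : a <= b <= -1 -> ex_RInt kern a b.
Proof.
  intros hab. apply ex_RInt_ext with kern_left.
  - intros y hy. rewrite Rmin_left, Rmax_right in hy by lra.
    symmetry. apply kern_eq_left. lra.
  - apply (@ex_RInt_continuous R_CompleteNormedModule). intros y hy.
    rewrite Rmin_left, Rmax_right in hy by lra.
    apply (@ex_derive_continuous R_AbsRing R_NormedModule). unfold kern_left.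
    auto_derive. repeat split; try lra. apply Rdiv_lt_0_compat; lra.
Qed.

Lemma ex_RInt_kern_right a b : 2 * x + 1 <= a <= b -> ex_RInt kern a b.
Proof.
  intros hab. apply ex_RInt_ext with kern_right.
  - intros y hy. rewrite Rmin_left, Rmax_right in hy by lra.
    symmetry. apply kern_eq_right. lra.
  - apply (@ex_RInt_continuous R_CompleteNormedModule). intros y hy.
    rewrite Rmin_left, Rmax_right in hy by lra.
    apply (@ex_derive_continuous R_AbsRing R_NormedModule). unfold kern_right.
    auto_derive. repeat split; try lra. apply Rdiv_lt_0_compat; lra.
Qed.

Lemma is_RInt_kern_mid : is_RInt kern (-1) (2 * x + 1) 0.
Proof.
  apply is_RInt_ext with (fun _ => 0).
  - intros y hy. rewrite Rmin_left, Rmax_right in hy by lra.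
    symmetry. apply kern_eq_mid. lra.
  - generalize (is_RInt_const (-1) (2 * x + 1) 0).
    unfold scal; simpl; unfold mult; simpl. now rewrite Rmult_0_r.
Qed.

Lemma RInt_kern_left_nonpos a b : a <= b <= -1 -> RInt kern a b <= 0.
Proof.
  intros hab. apply RInt_nonpos; [lra | now apply ex_RInt_kern_left |].
  intros y hy. rewrite kern_eq_left by lra. apply kern_left_nonpos. lra.
Qed.

Lemma RInt_kern_right_nonpos a b : 2 * x + 1 <= a <= b -> RInt kern a b <= 0.
Proof.
  intros hab. apply RInt_nonpos; [lra | now apply ex_RInt_kern_right |].
  intros y hy. rewrite kern_eq_right by lra. apply kern_right_nonpos. lra.
Qed.

(* \int_a^{-1} -1/y^2 dy = -1 - 1/a >= -1. *)
Lemma RInt_kern_left_lower a : a <= -1 -> -1 <= RInt kern a (-1).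
Proof.
  intros ha.
  assert (hprim : is_RInt (fun y => -1 / (y * y)) a (-1) (minus (/ (-1)) (/ a))).
  { apply (is_RInt_derive Rinv); intros y hy; rewrite Rmin_left, Rmax_right in hy by lra.
    - auto_derive; [lra | field; lra].
    - apply (@ex_derive_continuous R_AbsRing R_NormedModule). auto_derive. nra. }
  apply Rle_trans with (RInt (fun y => -1 / (y * y)) a (-1)).
  - rewrite (is_RInt_unique _ _ _ _ hprim).
    assert (/ a < 0) by (apply Rinv_lt_0_compat; lra).
    unfold minus, plus, opp; simpl. replace (/ (-1)) with (-1) by field. lra.
  - apply RInt_le; [lra | eexists; exact hprim | now apply ex_RInt_kern_left |].
    intros y hy. rewrite kern_eq_left by lra. apply kern_left_lower. lra.
Qed.

(* \int_{2x+1}^b -2/(y-1)^2 dy = 2/(b-1) - 1/x >= -1. *)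
Lemma RInt_kern_right_lower b : 2 * x + 1 <= b -> -1 <= RInt kern (2 * x + 1) b.
Proof.
  intros hb.
  assert (hprim : is_RInt (fun y => -2 / ((y - 1) * (y - 1))) (2 * x + 1) b
                    (minus (2 / (b - 1)) (2 / (2 * x + 1 - 1)))).
  { apply (is_RInt_derive (fun y => 2 / (y - 1))); intros y hy;
      rewrite Rmin_left, Rmax_right in hy by lra.
    - auto_derive; [lra | field; lra].
    - apply (@ex_derive_continuous R_AbsRing R_NormedModule). auto_derive. nra. }
  apply Rle_trans with (RInt (fun y => -2 / ((y - 1) * (y - 1))) (2 * x + 1) b).
  - rewrite (is_RInt_unique _ _ _ _ hprim).
    assert (0 <= 2 / (b - 1)) by (apply Rdiv_le_0_compat; lra).
    assert (2 / (2 * x + 1 - 1) <= 1) by (apply (Rle_div_l _ _ (2 * x + 1 - 1)); lra).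
    unfold minus, plus, opp; simpl. lra.
  - apply RInt_le; [lra | eexists; exact hprim | now apply ex_RInt_kern_right |].
    intros y hy. rewrite kern_eq_right by lra. apply kern_right_lower. lra.
Qed.

(* The logarithmic gain: \int_{-x}^{-1} dy/(4xy) = -log x/(4x). *)
Lemma RInt_kern_log : RInt kern (- x) (-1) <= - ln x / (4 * x).
Proof.
  assert (hprim : is_RInt (fun y => / (4 * x * y)) (- x) (-1)
                    (minus (ln (- -1) / (4 * x)) (ln (- - x) / (4 * x)))).
  { apply (is_RInt_derive (fun y => ln (- y) / (4 * x))); intros y hy;
      rewrite Rmin_left, Rmax_right in hy by lra.
    - auto_derive; [lra | field; lra].
    - apply (@ex_derive_continuous R_AbsRing R_NormedModule). auto_derive. nra. }
  replace (- ln x / (4 * x)) with (RInt (fun y => / (4 * x * y)) (- x) (-1)).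
  - apply RInt_le; [lra | apply ex_RInt_kern_left; lra | eexists; exact hprim |].
    intros y hy. rewrite kern_eq_left by lra. apply kern_left_log. lra.
  - rewrite (is_RInt_unique _ _ _ _ hprim). unfold minus, plus, opp; simpl.
    replace (- -1) with 1 by ring. rewrite Ropp_involutive, ln_1. field. lra.
Qed.

Lemma sym_int_split N : 2 * x + 1 <= N ->
  ex_RInt kern (- N) N /\ RInt kern (- N) N = RInt kern (- N) (-1) + RInt kern (2 * x + 1) N.
Proof.
  intros hN.
  assert (hL : ex_RInt kern (- N) (-1)) by (apply ex_RInt_kern_left; lra).
  assert (hR : ex_RInt kern (2 * x + 1) N) by (apply ex_RInt_kern_right; lra).
  assert (hM : ex_RInt kern (-1) (2 * x + 1)) by (eexists; exact is_RInt_kern_mid).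
  assert (hLM : ex_RInt kern (- N) (2 * x + 1)) by (eapply ex_RInt_Chasles; eauto).
  split; [eapply ex_RInt_Chasles; eauto|].
  rewrite <- (RInt_Chasles kern (- N) (2 * x + 1) N), <- (RInt_Chasles kern (- N) (-1)) by auto.
  rewrite (is_RInt_unique _ _ _ _ is_RInt_kern_mid). unfold plus; simpl. ring.
Qed.

(* Widening the window only adds nonpositive contributions. *)
Lemma sym_int_decr N : 2 * x + 1 <= N -> RInt kern (- (N + 1)) (N + 1) <= RInt kern (- N) N.
Proof.
  intros hN.
  destruct (sym_int_split N hN) as [_ ->]. destruct (sym_int_split (N + 1) ltac:(lra)) as [_ ->].
  rewrite <- (RInt_Chasles kern (- (N + 1)) (- N) (-1)) by (apply ex_RInt_kern_left; lra).
  rewrite <- (RInt_Chasles kern (2 * x + 1) N (N + 1)) by (apply ex_RInt_kern_right; lra).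
  unfold plus; simpl.
  assert (RInt kern (- (N + 1)) (- N) <= 0) by (apply RInt_kern_left_nonpos; lra).
  assert (RInt kern N (N + 1) <= 0) by (apply RInt_kern_right_nonpos; lra). lra.
Qed.

Lemma sym_int_lower N : 2 * x + 1 <= N -> -2 <= RInt kern (- N) N.
Proof.
  intros hN. destruct (sym_int_split N hN) as [_ ->].
  assert (h1 := RInt_kern_left_lower (- N) ltac:(lra)).
  assert (h2 := RInt_kern_right_lower N hN). lra.
Qed.

Lemma sym_int_upper N : 2 * x + 1 <= N -> RInt kern (- N) N <= - ln x / (4 * x).
Proof.
  intros hN. destruct (sym_int_split N hN) as [_ ->].
  rewrite <- (RInt_Chasles kern (- N) (- x) (-1)) by (apply ex_RInt_kern_left; lra).
  unfold plus; simpl.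
  assert (h1 := RInt_kern_log).
  assert (RInt kern (- N) (- x) <= 0) by (apply RInt_kern_left_nonpos; lra).
  assert (RInt kern (2 * x + 1) N <= 0) by (apply RInt_kern_right_nonpos; lra). lra.
Qed.

Lemma kern_line_int : exists l, line_int kern l /\ l <= - ln x / (4 * x).
Proof.
  destruct (nfloor_ex (2 * x + 1) ltac:(lra)) as [n hn].
  set (N0 := S n).
  assert (hN0 : forall N, (N0 <= N)%nat -> 2 * x + 1 <= INR N).
  { intros N hN. apply le_INR in hN. unfold N0 in hN. rewrite S_INR in hN. lra. }
  set (sym_integral := fun N => RInt kern (- INR N) (INR N)).
  destruct (decr_bounded_lim (fun n => sym_integral (n + N0)%nat) 2 (- ln x / (4 * x))) as [l [hlim hl]].
  - intros m. unfold sym_integral. rewrite plus_Sn_m, S_INR. apply sym_int_decr, hN0. lia.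
  - intros m. apply sym_int_lower, hN0. lia.
  - intros m. apply sym_int_upper, hN0. lia.
  - exists l. split; auto.
    apply (line_int_of_lim kern l N0).
    + intros y. apply Rle_trans with 1; [apply kern_bound | apply (le_INR 1); unfold N0; lia].
    + intros N hN. apply sym_int_split, hN0, hN.
    + now apply (is_lim_seq_incr_n sym_integral N0).
Qed.

End TruncatedKernel.

Theorem mainTheorem8 :
  exists m C : R, 1 < m /\ 0 < C /\
    forall x : R, m < x -> Hstar_ge H_chi01 x (C * (ln x / x)).
Proof.
  exists 2, (1 / 4). split; [lra|]. split; [lra|].
  intros x hx.
  destruct (kern_line_int x ltac:(lra)) as [l [hint hl]].
  apply (Hstar_ge_of_line_int _ _ (x + 1) l); [lra | exact hint |].
  assert (- l <= Rabs l) by (rewrite <- Rabs_Ropp; apply Rle_abs).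
  replace (1 / 4 * (ln x / x)) with (- (- ln x / (4 * x))) by (field; lra). lra.
Qed.
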